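(* Let $n$ and $k$ be integers with $1\le k<n/2$. Then $\mathrm{DGP}(n,k)$ is edge-transitive if and only if $A(n,k)\neq B(n,k)$.
   Context: $\mathrm{DGP}(n,k)$ is the graph with vertex set $\{(u_i,j),(v_i,j): 0\le i\le n-1,\ j\in\{0,1\}\}$ and edges $\{(u_i,j),(u_{i+1},1-j)\}$, $\{(u_i,j),(v_i,1-j)\}$ (spokes, forming the set $\mathcal{S}$), $\{(v_i,j),(v_{i+k},1-j)\}$, subscripts mod $n$ (the canonical double cover of the generalized Petersen graph $\mathrm{GP}(n,k)$). $A(n,k)=\mathrm{Aut}(\mathrm{DGP}(n,k))$ and $B(n,k)$ is the setwise stabilizer of $\mathcal{S}$ in $A(n,k)$. *)

From mathcomp Require Import all_boot all_fingroup.
Set Implicit Arguments.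
Unset Strict Implicit.
Unset Printing Implicit Defensive.

(* Vertices of DGP(n,k): (side, i, j) where side = false means u_i,
   side = true means v_i, i : 'I_n, and j : bool is the layer (0 = false). *)
Definition dgp_vertex (n : nat) : finType := (bool * 'I_n * bool)%type.

Definition is_u (n : nat) (x : dgp_vertex n) : bool := ~~ x.1.1.
Definition is_v (n : nat) (x : dgp_vertex n) : bool := x.1.1.
Definition idx (n : nat) (x : dgp_vertex n) : nat := val x.1.2.
Definition lay (n : nat) (x : dgp_vertex n) : bool := x.2.

Definition outer_arc n (x y : dgp_vertex n) : bool :=
  [&& is_u x, is_u y, idx y == (idx x + 1) %% n & lay y == ~~ lay x].
Definition spoke_arc n (x y : dgp_vertex n) : bool :=
  [&& is_u x, is_v y, idx y == idx x & lay y == ~~ lay x].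
Definition inner_arc n k (x y : dgp_vertex n) : bool :=
  [&& is_v x, is_v y, idx y == (idx x + k) %% n & lay y == ~~ lay x].

Definition dgp_adj n k (x y : dgp_vertex n) : bool :=
  [|| outer_arc x y, outer_arc y x, spoke_arc x y, spoke_arc y x,
      inner_arc k x y | inner_arc k y x].

Definition dgp_edges n k : {set {set dgp_vertex n}} :=
  [set e : {set dgp_vertex n} |
    [exists x, exists y, dgp_adj k x y && (e == [set x; y])]].

Definition dgp_spokes n : {set {set dgp_vertex n}} :=
  [set e : {set dgp_vertex n} |
    [exists x, exists y, spoke_arc x y && (e == [set x; y])]].

Definition A_aut n k : {set {perm dgp_vertex n}} :=
  [set p : {perm dgp_vertex n} |
    [forall x, forall y, dgp_adj k (p x) (p y) == dgp_adj k x y]].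

Definition B_stab n k : {set {perm dgp_vertex n}} :=
  [set p in A_aut n k | [set (p @: e) | e : {set dgp_vertex n} in dgp_spokes n] == dgp_spokes n].

Definition edge_transitive n k : Prop :=
  forall e1 e2, e1 \in dgp_edges n k -> e2 \in dgp_edges n k ->
    exists2 p, p \in A_aut n k & p @: e1 = e2.

From mathcomp Require Import all_boot all_fingroup.

(* Shifting the index and possibly swapping the layers gives automorphisms
   under which the spokes, the outer edges and the inner edges each form one
   orbit, so the edge orbits of A(n,k) are unions of these three classes.
   If A <> B, some automorphism moves a spoke off S, so the class of spokes
   fuses with another class.  The outer class fuses too: otherwise A would
   preserve the u-vertices (the vertices on outer edges), hence the edges
   joining u- and v-vertices, i.e. S; the inner class likewise, with the
   v-vertices.  Three classes each fused with another form a single orbit.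
   Conversely, an automorphism taking a spoke to an outer edge moves S. *)

Set Implicit Arguments.
Unset Strict Implicit.
Unset Printing Implicit Defensive.

Section GroupActionOrbits.

Variables (aT : finGroupType) (T : finType) (to : {action aT &-> T}).
Variable G : {group aT}.
Local Notation orb x := (orbit to G x).

Lemma acts_of_stable (S : {set T}) :
  (forall a x, a \in G -> x \in S -> to x a \in S) -> [acts G, on S | to].
Proof.
move=> GS; apply/actsP => a Ga x; apply/idP/idP; last exact: GS.
by move=> Sxa; rewrite -(actK to a x); apply: GS; rewrite ?groupV.
Qed.

Lemma orbit_fusion (E S1 S2 S3 : {set T}) x1 x2 x3 :
    E = S1 :|: (S2 :|: S3) -> [acts G, on E | to] ->
    S1 \subset orb x1 -> S2 \subset orb x2 -> S3 \subset orb x3 ->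
  ~~ [acts G, on S1 | to] -> (x2 \in orb x1) || (x3 \in orb x1).
Proof.
move=> defE actsE /subsetP S1x1 /subsetP S2x2 /subsetP S3x3.
apply: contraR => /norP[x2x1 x3x1]; apply: acts_of_stable => a x Ga S1x.
have xa_x1 : to x a \in orb x1 by rewrite orbit_actr ?S1x1.
have : to x a \in E by rewrite (acts_act actsE Ga) defE inE S1x.
rewrite defE !inE => /orP[// | /orP[/S2x2 | /S3x3]] xa_x.
- by case/negP: x2x1; apply: orbit_trans xa_x1; rewrite orbit_sym.
- by case/negP: x3x1; apply: orbit_trans xa_x1; rewrite orbit_sym.
Qed.

Lemma orbits_merge3 x1 x2 x3 :
    (x2 \in orb x1) || (x3 \in orb x1) ->
    (x1 \in orb x2) || (x3 \in orb x2) ->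
    (x1 \in orb x3) || (x2 \in orb x3) ->
  (x2 \in orb x1) && (x3 \in orb x1).
Proof.
rewrite -!orbit_eq_mem; move: (orb x1) (orb x2) (orb x3) => O1 O2 O3.
by do 3!(case/orP=> /eqP ?; subst); rewrite ?eqxx.
Qed.

End GroupActionOrbits.

Lemma setact_perm (T : finType) (e : {set T}) (p : {perm T}) :
  ('P^*)%act e p = p @: e.
Proof. by []. Qed.

Section DoubleGeneralizedPetersen.

Variables (n k : nat).
Local Notation V := (dgp_vertex n).
Local Notation A := (A_aut n k).

Definition arc_edges (r : rel V) : {set {set V}} :=
  [set e | [exists x, exists y, r x y && (e == [set x; y])]].

Lemma arc_edgesP (r : rel V) e :
  reflect (exists x y, r x y /\ e = [set x; y]) (e \in arc_edges r).
Proof.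
rewrite inE; apply: (iffP existsP) => [[x /existsP[y /andP[rxy /eqP->]]] | ].
  by exists x, y.
by case=> x [y [rxy ->]]; exists x; apply/existsP; exists y; rewrite rxy eqxx.
Qed.

Lemma mem_arc_edges (r : rel V) x y : r x y -> [set x; y] \in arc_edges r.
Proof. by move=> rxy; apply/arc_edgesP; exists x, y. Qed.

Lemma mem_arc_edgesC (r : rel V) x y : r y x -> [set x; y] \in arc_edges r.
Proof. by rewrite setUC; apply: mem_arc_edges. Qed.

Lemma eq_arc_edges (r r' : rel V) : r =2 r' -> arc_edges r = arc_edges r'.
Proof.
move=> rr'; apply/setP => e; rewrite !inE.
by under eq_existsb do under eq_existsb do rewrite rr'.
Qed.

Lemma arc_edgesS (r r' : rel V) : subrel r r' -> arc_edges r \subset arc_edges r'.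
Proof.
by move=> rr'; apply/subsetP => e /arc_edgesP[x [y [/rr' rxy ->]]]; apply: mem_arc_edges.
Qed.

Lemma arc_edges_act (r : rel V) (p : {perm V}) e :
    (forall x y, r x y -> r (p x) (p y)) ->
  e \in arc_edges r -> ('P^*)%act e p \in arc_edges r.
Proof.
move=> pr /arc_edgesP[x [y [rxy ->]]].
by rewrite setact_perm imsetU1 imset_set1 mem_arc_edges ?pr.
Qed.

Definition arc (s s' : bool) (d : nat) : rel V :=
  [rel x y | [&& is_v x == s, is_v y == s',
                idx y == (idx x + d) %% n & lay y == ~~ lay x]].

Lemma outer_arcE : outer_arc (n := n) =2 arc false false 1.
Proof. by case=> [[[] i] j] [[[] i'] j']. Qed.

Lemma spoke_arcE : spoke_arc (n := n) =2 arc false true 0.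
Proof.
by case=> [[[] i] j] [[[] i'] j']; rewrite /spoke_arc /arc /idx //= addn0 modn_small.
Qed.

Lemma inner_arcE : inner_arc k (n := n) =2 arc true true k.
Proof. by case=> [[[] i] j] [[[] i'] j']. Qed.

Lemma dgp_adjE (x y : V) : dgp_adj k x y =
  [|| arc false false 1 x y, arc false false 1 y x, arc false true 0 x y,
      arc false true 0 y x, arc true true k x y | arc true true k y x].
Proof. by rewrite /dgp_adj !outer_arcE !spoke_arcE !inner_arcE. Qed.

Lemma spoke_arc_adj (x y : V) :
  spoke_arc x y = [&& ~~ is_v x, is_v y & dgp_adj k x y].
Proof.
case: x y => [[[] i] j] [[[] i'] j'];
by rewrite dgp_adjE spoke_arcE /arc /= ?orbF.
Qed.

Local Notation spokes := (dgp_spokes n).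
Local Notation outers := (arc_edges (arc false false 1)).
Local Notation inners := (arc_edges (arc true true k)).

Lemma spokesE : spokes = arc_edges (arc false true 0).
Proof. exact: (eq_arc_edges spoke_arcE). Qed.

Lemma dgp_edgesE : dgp_edges n k = spokes :|: (outers :|: inners).
Proof.
rewrite spokesE; apply/eqP; rewrite eqEsubset !subUset.
rewrite !arc_edgesS ?andbT; last 3 first.
  1-3: by move=> x y; rewrite dgp_adjE => ->; rewrite ?orbT.
apply/subsetP => e /arc_edgesP[x [y [+ ->]]]; rewrite dgp_adjE !in_setU.
move=> /orP[xy|/orP[xy|/orP[xy|/orP[xy|/orP[xy|xy]]]]];
  by rewrite ?(mem_arc_edges xy) ?(mem_arc_edgesC xy) ?orbT.
Qed.

Lemma A_autP (p : {perm V}) :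
  reflect (forall x y, dgp_adj k (p x) (p y) = dgp_adj k x y) (p \in A).
Proof.
rewrite inE; apply: (iffP forallP) => [pA x y | pA x].
  by apply/eqP; move/forallP: (pA x).
by apply/forallP => y; rewrite pA.
Qed.

Fact A_aut_group_set : group_set A.
Proof.
apply/group_setP; split; first by apply/A_autP => x y; rewrite !perm1.
by move=> p q /A_autP pA /A_autP qA; apply/A_autP => x y; rewrite !permM qA pA.
Qed.

Canonical A_aut_group := group A_aut_group_set.

Lemma acts_dgp_edges : [acts A, on dgp_edges n k | 'P^*].
Proof.
by apply: acts_of_stable => p e /A_autP pA; apply: arc_edges_act => x y; rewrite pA.
Qed.

Lemma B_stabE : B_stab n k = A :&: 'N(spokes | 'P^*)%g.
Proof.
apply/setP => p; rewrite in_setI [p \in B_stab n k]inE; congr (_ && _).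
by rewrite -astab1_set; apply/eqP/astab1P.
Qed.

Lemma A_aut_eq_B_stab : (A == B_stab n k) = [acts A, on spokes | 'P^*].
Proof. by rewrite B_stabE eq_sym; apply: (sameP eqP setIidPl). Qed.

Lemma side_acts_spokes :
    (forall (p : {perm V}) x, p \in A -> is_v (p x) = is_v x) ->
  [acts A, on spokes | 'P^*].
Proof.
move=> pv; apply: acts_of_stable => p e pA; apply: arc_edges_act => x y.
by rewrite !spoke_arc_adj !pv // (A_autP _ pA).
Qed.

Hypothesis n_gt0 : 0 < n.

Definition mkv (s : bool) (i : nat) (j : bool) : V :=
  (s, Ordinal (ltn_pmod i n_gt0), j).

Lemma mkv_mod s i j : mkv s (i %% n) j = mkv s i j.
Proof. by congr (_, _, _); apply: val_inj; rewrite /= modn_mod. Qed.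

Lemma mkvE (x : V) : mkv (is_v x) (idx x) (lay x) = x.
Proof.
case: x => [[s i] j]; rewrite /mkv /=; congr (_, _, _).
by apply: val_inj; rewrite /idx /= modn_small.
Qed.

Lemma idx_lt (x : V) : idx x < n. Proof. exact: ltn_ord. Qed.

Lemma is_v_mkv s i j : is_v (mkv s i j) = s. Proof. by []. Qed.
Lemma idx_mkv s i j : idx (mkv s i j) = i %% n. Proof. by []. Qed.
Lemma lay_mkv s i j : lay (mkv s i j) = j. Proof. by []. Qed.

Definition arc_rep (s s' : bool) (d : nat) : {set V} :=
  [set mkv s 0 false; mkv s' d true].

Lemma arc_rep_edge s s' d : arc_rep s s' d \in arc_edges (arc s s' d).
Proof. by apply: mem_arc_edges; rewrite /arc /idx /= ?mod0n !eqxx. Qed.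

Definition shift_fun (m : nat) (b : bool) (x : V) : V :=
  mkv (is_v x) (idx x + m) (lay x (+) b).

Lemma shift_inj m b : injective (shift_fun m b).
Proof.
move=> x y E; rewrite -[x]mkvE -[y]mkvE; congr mkv.
- by have := congr1 (@is_v n) E; rewrite !is_v_mkv.
- apply/eqP; move/eqP: (congr1 (@idx n) E).
  by rewrite /shift_fun !idx_mkv eqn_modDr !modn_small ?idx_lt.
- by have := congr1 (@lay n) E; rewrite /shift_fun !lay_mkv => /addIb.
Qed.

Definition shift m b : {perm V} := perm (@shift_inj m b).

Lemma shift_mkv m b s i j : shift m b (mkv s i j) = mkv s (i + m) (j (+) b).
Proof. by rewrite permE /shift_fun idx_mkv -mkv_mod modnDml mkv_mod. Qed.

Lemma arc_shift s s' d m b x y :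
  arc s s' d (shift m b x) (shift m b y) = arc s s' d x y.
Proof.
rewrite !permE /shift_fun /arc /= !is_v_mkv !idx_mkv.
rewrite modnDml addnAC eqn_modDr [idx y %% n]modn_small ?idx_lt //.
by case: b (lay x) (lay y) => [] [] [].
Qed.

Lemma shift_in_A m b : shift m b \in A.
Proof. by apply/A_autP => x y; rewrite !dgp_adjE !arc_shift. Qed.

Lemma arc_edges_orbit s s' d :
  arc_edges (arc s s' d) \subset orbit 'P^* A (arc_rep s s' d).
Proof.
apply/subsetP => e /arc_edgesP[x [y [/and4P[/eqP xs /eqP ys /eqP yx /eqP yl] ->]]].
apply/orbitP; exists (shift (idx x) (lay x)); first exact: shift_in_A.
rewrite setact_perm imsetU1 imset_set1 !shift_mkv add0n addFb addTb.
by rewrite -[mkv s' _ _]mkv_mod addnC -yx -yl -xs -ys !mkvE.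
Qed.

Lemma acts_arc_edges_side s d :
    [acts A, on arc_edges (arc s s d) | 'P^*] ->
  forall (p : {perm V}) x, p \in A -> is_v (p x) = is_v x.
Proof.
move=> actsE.
have side_s p x : p \in A -> is_v x = s -> is_v (p x) = s.
  move=> pA xs.
  have : [set x; mkv s (idx x + d) (~~ lay x)] \in arc_edges (arc s s d).
    by apply: mem_arc_edges; rewrite /arc /= xs !eqxx.
  rewrite -(acts_act actsE pA) setact_perm imsetU1 imset_set1.
  case/arc_edgesP=> a [b [/and4P[/eqP av /eqP bv _ _] Eab]].
  have : p x \in [set a; b] by rewrite -Eab set21.
  by rewrite !inE => /orP[] /eqP->.
move=> p x pA; suff : (is_v (p x) == s) = (is_v x == s).
  by move: (is_v x) (is_v (p x)); clear; case: s => [] [] [].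
apply/eqP/eqP => [pxs | /side_s-> //].
by rewrite -(permK p x); apply: side_s pxs; rewrite groupV.
Qed.

Local Notation s0 := (arc_rep false true 0).
Local Notation o0 := (arc_rep false false 1).
Local Notation i0 := (arc_rep true true k).

Lemma spokes_orbit : spokes \subset orbit 'P^* A s0.
Proof. by rewrite spokesE arc_edges_orbit. Qed.

Lemma edge_transitive_orbit e0 :
  dgp_edges n k \subset orbit 'P^* A e0 -> edge_transitive n k.
Proof.
move=> /subsetP sub_e0 e1 e2 /sub_e0/orbit_eqP e1e0 /sub_e0.
by rewrite -e1e0 => /orbitP[p pA <-]; exists p.
Qed.

Lemma not_acts_spokes_edge_transitive :
  ~~ [acts A, on spokes | 'P^*] -> edge_transitive n k.
Proof.
move=> nS.
have nO : ~~ [acts A, on outers | 'P^*].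
  by apply: contra nS => /acts_arc_edges_side; apply: side_acts_spokes.
have nI : ~~ [acts A, on inners | 'P^*].
  by apply: contra nS => /acts_arc_edges_side; apply: side_acts_spokes.
have fS := orbit_fusion dgp_edgesE acts_dgp_edges spokes_orbit
  (arc_edges_orbit _ _ _) (arc_edges_orbit _ _ _) nS.
have edgesO : dgp_edges n k = outers :|: (spokes :|: inners).
  by rewrite dgp_edgesE setUCA.
have edgesI : dgp_edges n k = inners :|: (spokes :|: outers).
  by rewrite dgp_edgesE setUA setUC.
have fO := orbit_fusion edgesO acts_dgp_edges
  (arc_edges_orbit _ _ _) spokes_orbit (arc_edges_orbit _ _ _) nO.
have fI := orbit_fusion edgesI acts_dgp_edges
  (arc_edges_orbit _ _ _) spokes_orbit (arc_edges_orbit _ _ _) nI.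
have /andP[/orbit_eqP o0s0 /orbit_eqP i0s0] := orbits_merge3 fS fO fI.
apply: (@edge_transitive_orbit s0).
rewrite dgp_edgesE !subUset spokes_orbit /=.
by apply/andP; split; [rewrite -o0s0 | rewrite -i0s0]; apply: arc_edges_orbit.
Qed.

Lemma outer_rep_not_spoke : o0 \notin spokes.
Proof.
rewrite spokesE; apply/arc_edgesP => -[x [y [/and4P[_ /eqP yv _ _] Exy]]].
have : y \in o0 by rewrite Exy set22.
by rewrite !inE => /orP[] /eqP yE; rewrite yE in yv.
Qed.

Lemma edge_transitive_not_acts_spokes :
  edge_transitive n k -> ~~ [acts A, on spokes | 'P^*].
Proof.
move=> ET; apply/negP => /acts_act actsS.
have s0_spoke : s0 \in spokes by rewrite spokesE arc_rep_edge.
have s0_edge : s0 \in dgp_edges n k by rewrite dgp_edgesE in_setU s0_spoke.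
have o0_edge : o0 \in dgp_edges n k.
  by rewrite dgp_edgesE !in_setU arc_rep_edge orbT.
have [p pA ps0] := ET s0 o0 s0_edge o0_edge.
have := actsS p pA s0.
by rewrite setact_perm ps0 s0_spoke (negbTE outer_rep_not_spoke).
Qed.

End DoubleGeneralizedPetersen.

Theorem lemma5p6 (n k : nat) : 1 <= k -> 2 * k < n ->
  (edge_transitive n k <-> A_aut n k != B_stab n k).
Proof.
move=> _ two_k_lt_n; have n_gt0 : 0 < n by apply: leq_ltn_trans two_k_lt_n.
rewrite A_aut_eq_B_stab; split.
  exact: edge_transitive_not_acts_spokes.
exact: not_acts_spokes_edge_transitive.
Qed.
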